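(* Let $G$ be a graph without isolated vertices. There exists a GDDS $S$ of $G$ such that $|\widehat{S^1}|\ge|\widehat{S^2}|$; in particular $|\widehat{S^1}|\ge\gamma_{gr}^{\times2}(G)/2$.
   Context: Graphs are finite, simple, undirected; $N[v]$ closed neighborhood. A sequence $S=(v_1,\dots,v_k)$ of distinct vertices is a double neighborhood sequence if for each $i$ some $w\in N[v_i]$ satisfies $|\{j<i:w\in N[v_j]\}|\le1$; a double dominating sequence (DDS) if moreover its vertex set $D$ satisfies $|N[w]\cap D|\ge2$ for all $w$; a GDDS is a DDS of maximum length, and this length is $\gamma_{gr}^{\times2}(G)$. $\widehat S$ is the vertex set of $S$. $S^1$ is the subsequence of $S$ consisting of those $v_i$ with $N[v_i]\setminus\bigcup_{j<i}N[v_j]\neq\emptyset$, and $S^2$ is the subsequence of the remaining vertices. *)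

From mathcomp Require Import all_boot all_order.
Set Implicit Arguments. Unset Strict Implicit. Unset Printing Implicit Defensive.

Section DDS.
Variables (T : finType) (e : rel T).

Definition simple_graph : Prop := symmetric e /\ irreflexive e.
Definition no_isolated : Prop := forall v : T, exists u : T, e v u.

Definition cnbh (v : T) : {set T} := [set w | (w == v) || e v w].

Definition sv (s : seq T) (i : 'I_(size s)) : T := tnth (in_tuple s) i.

Definition cover_count (s : seq T) (i : nat) (w : T) : nat :=
  count (fun u => w \in cnbh u) (take i s).

Definition is_dns (s : seq T) : bool :=
  uniq s &&
  [forall i : 'I_(size s), [exists w in cnbh (sv i), cover_count s i w <= 1]].

Definition is_dds (s : seq T) : bool :=
  is_dns s && [forall w : T, 2 <= #|cnbh w :&: [set x in s]|].

Definition is_gdds (s : seq T) : Prop :=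
  is_dds s /\ forall t : seq T, is_dds t -> size t <= size s.

Definition gamma_gr2 : nat :=
  \max_(n < #|T|.+1 | [exists t : n.-tuple T, is_dds t]) n.

Definition is_new (s : seq T) (i : 'I_(size s)) : bool :=
  cnbh (sv i) :\: \bigcup_(u <- take i s) cnbh u != set0.

Definition S1 (s : seq T) : seq T := [seq sv i | i <- enum 'I_(size s) & is_new i].
Definition S2 (s : seq T) : seq T := [seq sv i | i <- enum 'I_(size s) & ~~ is_new i].

End DDS.

From mathcomp Require Import all_boot all_order.
From mathcomp Require Import zify.
Set Implicit Arguments. Unset Strict Implicit. Unset Printing Implicit Defensive.

(* Every double neighborhood sequence can be reordered so that at least half of
   its vertices are new when played.  By induction on the length: if the last
   vertex v is not new after the reordered prefix, the vertex w witnessing its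
   legality lies in N[u] for exactly one earlier u; reorder the sequence without
   u, then play v (new through w) followed by u (still legal through w).  A GDDS
   exists because, in a graph without isolated vertices, a legal sequence that is
   not double dominating can always be extended; reordering it gives the claim,
   since |S^1| + |S^2| is its length. *)

Section DoubleNeighborhoodSequences.
Variables (T : finType) (e : rel T).

Definition covers (p : seq T) (w : T) : nat := count (fun u => w \in cnbh e u) p.

Definition admissible (p : seq T) (v : T) : bool :=
  [exists w in cnbh e v, covers p w <= 1].

Definition new_after (p : seq T) (v : T) : bool :=
  cnbh e v :\: \bigcup_(u <- p) cnbh e u != set0.

Definition steps (s : seq T) : seq (seq T * T) :=
  [seq (take i s, sv i) | i : 'I_(size s) <- enum 'I_(size s)].

Lemma steps_nil : steps [::] = [::].
Proof. by apply/nilP; rewrite /nilp size_map size_enum_ord. Qed.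

Lemma steps_rcons s v : steps (rcons s v) = rcons (steps s) (s, v).
Proof.
have steps_nth x0 r :
    steps r = [seq (take i r, nth x0 r i) | i <- iota 0 (size r)].
  rewrite /steps -val_enum_ord -map_comp.
  by apply: eq_map => i /=; rewrite /sv (tnth_nth x0).
rewrite !(steps_nth v) size_rcons -addn1 iotaD map_cat cats1 /= add0n.
rewrite nth_rcons ltnn eqxx -[rcons s v]cats1 take_size_cat //; congr rcons.
apply/eq_in_map => i; rewrite mem_iota => /andP[_ lt_is].
by rewrite nth_cat lt_is takel_cat // ltnW.
Qed.

Lemma map_snd_steps s : [seq x.2 | x <- steps s] = s.
Proof.
elim/last_ind: s => [|s v IHs]; first by rewrite steps_nil.
by rewrite steps_rcons map_rcons IHs.
Qed.

Lemma is_dnsE s :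
  is_dns e s = uniq s && all (fun x => admissible x.1 x.2) (steps s).
Proof.
rewrite /is_dns /steps all_map; congr andb.
by apply/forallP/allP => [adm i _|adm i]; [exact: adm | exact: adm (mem_enum _ i)].
Qed.

Lemma S1E s : S1 e s = [seq x.2 | x <- steps s & new_after x.1 x.2].
Proof. by rewrite /S1 /steps filter_map -map_comp. Qed.

Lemma S2E s : S2 e s = [seq x.2 | x <- steps s & ~~ new_after x.1 x.2].
Proof. by rewrite /S2 /steps filter_map -map_comp. Qed.

Lemma is_dns_nil : is_dns e [::].
Proof. by rewrite is_dnsE steps_nil. Qed.

Lemma is_dns_rcons s v :
  is_dns e (rcons s v) = [&& is_dns e s, v \notin s & admissible s v].
Proof.
rewrite !is_dnsE steps_rcons all_rcons rcons_uniq /=.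
by case: (v \in s); case: (uniq s); case: (admissible s v); rewrite /= ?andbT ?andbF.
Qed.

Lemma S1_rcons s v :
  S1 e (rcons s v) = if new_after s v then rcons (S1 e s) v else S1 e s.
Proof. by rewrite !S1E steps_rcons filter_rcons /=; case: new_after; rewrite ?map_rcons. Qed.

Lemma S2_rcons s v :
  S2 e (rcons s v) = if new_after s v then S2 e s else rcons (S2 e s) v.
Proof. by rewrite !S2E steps_rcons filter_rcons /=; case: new_after; rewrite ?map_rcons. Qed.

Lemma size_S1_S2 s : size (S1 e s) + size (S2 e s) = size s.
Proof.
by rewrite S1E S2E !size_map !size_filter count_predC -(size_map snd) map_snd_steps.
Qed.

Lemma S1_subseq s : subseq (S1 e s) s.
Proof. by rewrite S1E -[X in subseq _ X]map_snd_steps map_subseq ?filter_subseq. Qed.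

Lemma S2_subseq s : subseq (S2 e s) s.
Proof. by rewrite S2E -[X in subseq _ X]map_snd_steps map_subseq ?filter_subseq. Qed.

Lemma covers_cat p q w : covers (p ++ q) w = covers p w + covers q w.
Proof. exact: count_cat. Qed.

Lemma covers_perm p q : perm_eq p q -> covers p =1 covers q.
Proof. by move/permP => eq_pq w; exact: eq_pq. Qed.

Lemma new_afterE p v : new_after p v = [exists w in cnbh e v, covers p w == 0].
Proof.
have mem_cover w : (w \in \bigcup_(u <- p) cnbh e u) = (covers p w != 0).
  elim: p => [|u p IHp]; first by rewrite big_nil in_set0.
  by rewrite big_cons in_setU IHp /covers /=; case: (w \in cnbh e u).
apply/set0Pn/existsP => -[w] wP; exists w.
  by move: wP; rewrite in_setD mem_cover negbK andbC.
by move: wP; rewrite in_setD mem_cover negbK andbC.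
Qed.

Lemma admissible_perm p q v : perm_eq p q -> admissible p v = admissible q v.
Proof. by move/covers_perm => eq_pq; apply: eq_existsb => w; rewrite eq_pq. Qed.

Lemma new_after_perm p q v : perm_eq p q -> new_after p v = new_after q v.
Proof.
by move/covers_perm => eq_pq; rewrite !new_afterE; apply: eq_existsb => w; rewrite eq_pq.
Qed.

Lemma is_dns_uniq s : is_dns e s -> uniq s.
Proof. by case/andP. Qed.

Lemma is_dns_delete p1 x p2 : is_dns e (p1 ++ x :: p2) -> is_dns e (p1 ++ p2).
Proof.
elim/last_ind: p2 => [|p2 y IHp2].
  by rewrite cats1 cats0 is_dns_rcons => /andP[].
rewrite -rcons_cons -!rcons_cat !is_dns_rcons => /and3P[dns_p y_notin adm_y].
rewrite IHp2 //=; apply/andP; split.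
  by apply: contra y_notin; rewrite !mem_cat inE => /orP[] ->; rewrite ?orbT.
case/exists_inP: adm_y => w wy cover_w; apply/exists_inP; exists w => //.
apply: leq_trans cover_w; apply: leq_count_subseq.
by rewrite cat_subseq ?subseq_cons.
Qed.

Lemma admissible_old_split p v :
  admissible p v -> ~~ new_after p v ->
  exists w p1 u p2, [/\ p = p1 ++ u :: p2, w \in cnbh e v, w \in cnbh e u
                      & covers (p1 ++ p2) w = 0].
Proof.
case/exists_inP=> w wv cover_w; rewrite new_afterE negb_exists_in => /forall_inP.
move=> /(_ w wv); rewrite -lt0n /covers -has_count => /hasP[u u_p wu].
case/splitPr: u_p cover_w => p1 p2; rewrite !covers_cat /covers /= wu => cover_w.
by exists w, p1, u, p2; split=> //; rewrite count_cat; lia.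
Qed.

Lemma new_after_uncovered p v w : w \in cnbh e v -> covers p w = 0 -> new_after p v.
Proof. by move=> wv cover_w; rewrite new_afterE; apply/exists_inP; exists w; rewrite ?cover_w. Qed.

Lemma is_dns_rcons2 t v u w :
  w \in cnbh e v -> w \in cnbh e u -> covers t w = 0 ->
  is_dns e (rcons (rcons t v) u) = [&& is_dns e t, v \notin t & u \notin rcons t v].
Proof.
move=> wv wu cover_w; rewrite !is_dns_rcons.
have adm_v : admissible t v by apply/exists_inP; exists w; rewrite ?cover_w.
have adm_u : admissible (rcons t v) u.
  by apply/exists_inP; exists w; rewrite // -cats1 covers_cat cover_w /covers /= wv.
by rewrite adm_v adm_u !andbT andbA.
Qed.

Lemma is_dns_reorder s :
  is_dns e s ->
  exists2 t, perm_eq s t & is_dns e t /\ size (S2 e t) <= size (S1 e t).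
Proof.
have [n] := ubnP (size s); elim: n s => // n IHn s.
case/lastP: s => [_ _|p v]; first by exists [::]; rewrite // S1E S2E steps_nil is_dns_nil.
rewrite size_rcons ltnS is_dns_rcons => lt_pn /and3P[dns_p v_notin_p adm_v].
have [new_v|old_v] := boolP (new_after p v).
  have [t pt [dns_t S21_t]] := IHn p lt_pn dns_p.
  exists (rcons t v); first by rewrite -!cats1 perm_cat2r.
  rewrite is_dns_rcons dns_t -(perm_mem pt) v_notin_p -(admissible_perm _ pt) adm_v.
  by rewrite S1_rcons S2_rcons -(new_after_perm _ pt) new_v size_rcons ltnW.
(* [v] is not new, so its witness [w] is covered exactly once in [p], by some [u];
   playing [v] just before [u] makes [v] new, and [u] stays legal through [w]. *)
have [w [p1 [u [p2 [def_p wv wu cover_w]]]]] := admissible_old_split adm_v old_v.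
move: def_p lt_pn dns_p v_notin_p => -> lt_pn dns_p v_notin_p.
have lt_p12n : size (p1 ++ p2) < n by move: lt_pn; rewrite !size_cat /=; lia.
have [t pt [dns_t S21_t]] := IHn _ lt_p12n (is_dns_delete dns_p).
have u_notin_t : u \notin t.
  by move/is_dns_uniq: dns_p; rewrite -(perm_mem pt) -cat1s uniq_catCA => /andP[].
exists (rcons (rcons t v) u).
  apply/permP => a; rewrite -!cats1 -cat1s !count_cat -(permP pt) count_cat /=; lia.
split.
  rewrite (is_dns_rcons2 wv wu); last by rewrite -(covers_perm pt).
  rewrite dns_t mem_rcons inE negb_or u_notin_t andbT -(perm_mem pt).
  have u_neq_v : u != v by apply: contraNneq v_notin_p => <-; rewrite mem_cat inE eqxx orbT.
  rewrite u_neq_v andbT; apply: contra v_notin_p.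
  by rewrite !mem_cat inE => /orP[]->; rewrite ?orbT.
have new_v : new_after t v by apply: (new_after_uncovered wv); rewrite -(covers_perm pt).
rewrite !S1_rcons !S2_rcons new_v; case: new_after; rewrite !size_rcons; lia.
Qed.

Lemma is_dds_perm s t : perm_eq s t -> is_dns e t -> is_dds e s -> is_dds e t.
Proof.
move=> st dns_t /andP[_ dom_s]; rewrite /is_dds dns_t.
by rewrite (_ : [set x in t] = [set x in s]) //; apply/setP => x; rewrite !inE (perm_mem st).
Qed.

Lemma is_gdds_perm s t : perm_eq s t -> is_dns e t -> is_gdds e s -> is_gdds e t.
Proof.
move=> st dns_t [dds_s max_s]; split; first exact: is_dds_perm dns_t dds_s.
by move=> r /max_s; rewrite (perm_size st).
Qed.

Lemma is_dns_size s : is_dns e s -> size s <= #|T|.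
Proof. by move/is_dns_uniq/card_uniqP <-; exact: max_card. Qed.

Lemma exists_gdds : (exists s, is_dds e s) -> exists2 s, is_gdds e s & size s = gamma_gr2 e.
Proof.
move=> [s0 dds_s0].
have dds_bound t : is_dds e t -> size t < #|T|.+1 by case/andP => /is_dns_size.
pose P (n : 'I_#|T|.+1) := [exists t : n.-tuple T, is_dds e t].
have P_size t (dds_t : is_dds e t) : P (Ordinal (dds_bound t dds_t)).
  by apply/existsP; exists (in_tuple t).
have P_nonempty : 0 < #|P|.
  by apply/card_gt0P; exists (Ordinal (dds_bound _ dds_s0)); exact: P_size.
have [n /existsP[s dds_s] gamma_n] := eq_bigmax_cond val P_nonempty.
exists s; last by rewrite size_tuple /gamma_gr2 gamma_n.
split=> // t dds_t; rewrite size_tuple -gamma_n.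
exact: (@leq_bigmax_cond _ (mem P) val _ (P_size t dds_t)).
Qed.

Section SimpleGraph.
Hypotheses (e_sym : symmetric e) (e_irr : irreflexive e) (e_noiso : no_isolated e).

Lemma mem_cnbhC v w : (w \in cnbh e v) = (v \in cnbh e w).
Proof. by rewrite !inE eq_sym e_sym. Qed.

Lemma covers_card s w : uniq s -> covers s w = #|cnbh e w :&: [set x in s]|.
Proof.
move=> uniq_s; rewrite /covers -size_filter -(elimT card_uniqP (filter_uniq _ uniq_s)).
by apply: eq_card => x; rewrite mem_filter in_setI in_set mem_cnbhC andbC.
Qed.

Lemma two_le_card_cnbh w : 2 <= #|cnbh e w|.
Proof.
have [u wu] := e_noiso w.
apply: leq_trans (subset_leq_card (_ : [set w; u] \subset cnbh e w)).
- by rewrite cards2; case: eqP wu => [<-|//]; rewrite e_irr.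
- by apply/subsetP => x; rewrite !inE => /orP[]/eqP->; rewrite ?eqxx ?wu ?orbT.
Qed.

Lemma is_dns_extend s : is_dns e s -> ~~ is_dds e s -> exists x, is_dns e (rcons s x).
Proof.
move=> dns_s; rewrite /is_dds dns_s => /forallPn[w]; rewrite -ltnNge => lt_w.
have /subsetPn[x xw x_notin_s] : ~~ (cnbh e w \subset [set x in s]).
  apply: contraTN lt_w => /setIidPl->; rewrite -leqNgt; exact: two_le_card_cnbh.
rewrite inE in x_notin_s; exists x; rewrite is_dns_rcons dns_s x_notin_s.
apply/exists_inP; exists w; first by rewrite mem_cnbhC.
by rewrite covers_card ?is_dns_uniq // -ltnS.
Qed.

Lemma exists_dds : exists s, is_dds e s.
Proof.
suff: forall s, is_dns e s -> exists t, is_dds e t by apply; exact: is_dns_nil.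
move=> s; have [n] := ubnP (#|T| - size s); elim: n s => // n IHn s lt_n dns_s.
have [dds_s|not_dds_s] := boolP (is_dds e s); first by exists s.
have [x dns_sx] := is_dns_extend dns_s not_dds_s.
have := is_dns_size dns_sx; rewrite size_rcons => size_sx.
by apply: (IHn _ _ dns_sx); rewrite size_rcons; lia.
Qed.

End SimpleGraph.

End DoubleNeighborhoodSequences.

Theorem corollary1 (T : finType) (e : rel T) :
  simple_graph e -> no_isolated e ->
  exists S : seq T,
    is_gdds e S /\
    #|[set x in S2 e S]| <= #|[set x in S1 e S]| /\
    gamma_gr2 e <= 2 * #|[set x in S1 e S]|.
Proof.
move=> [e_sym e_irr] e_noiso.
have [s gdds_s size_s] := exists_gdds (exists_dds e_sym e_irr e_noiso).
have dns_s : is_dns e s by case: gdds_s => /andP[].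
have [t st [dns_t S21_t]] := is_dns_reorder dns_s.
have card_sub r : subseq r t -> #|[set x in r]| = size r.
  by move=> rt; rewrite cardsE; apply/card_uniqP; exact: subseq_uniq rt (is_dns_uniq dns_t).
exists t; rewrite !card_sub ?S1_subseq ?S2_subseq // -size_s (perm_size st).
split; first exact: is_gdds_perm st dns_t gdds_s.
by rewrite -(size_S1_S2 e t) mul2n -addnn leq_add2l; split; exact: S21_t.
Qed.
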